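(* Let $f$, $g$, $\xi$, $F$ satisfy the standing assumptions below, and let $x$ be the unique continuous solution of $x'(t)=-f(x(t))+g(t)$, $t>0$, $x(0)=\xi$. Suppose there exist $\delta>0$ and a function $\phi$ increasing on $(0,\delta)$ with $\lim_{x\to0^+}f(x)/\phi(x)=1$, that \[ \lim_{t\to\infty}\frac{g(t)}{f(F^{-1}(t))}=+\infty, \] and that $x(t)\to0$ as $t\to\infty$. If either $f\in\mathrm{RV}_0(\beta)$ for some $\beta>1$, or $f\circ F^{-1}\in\mathrm{RV}_\infty(-1)$, then \[ \lim_{t\to\infty}\frac{F(x(t))}{t}=0. \]
   Context: Standing assumptions: $f\in C(\mathbb{R};\mathbb{R})$ is locally Lipschitz continuous on $\mathbb{R}$, $f(0)=0$ and $xf(x)>0$ for $x\neq0$; $g\in C([0,\infty);\mathbb{R})$ with $g(t)>0$ for $t>0$; $\xi>0$. $F(x)=\int_x^1 \frac{du}{f(u)}$ for $x>0$, with $\lim_{x\to0^+}F(x)=+\infty$; $F^{-1}$ is the inverse of the strictly decreasing function $F$. $\mathrm{RV}_0(\beta)$: measurable positive $\varphi$ on $(0,\infty)$ with $\varphi(\lambda x)/\varphi(x)\to\lambda^\beta$ as $x\to0^+$ for every $\lambda>0$. $\mathrm{RV}_\infty(\alpha)$: measurable positive $h$ with $h(\lambda t)/h(t)\to\lambda^\alpha$ as $t\to\infty$ for every $\lambda>0$. *)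

From Stdlib Require Export Reals.
Open Scope R_scope.

Definition loc_lipschitz (f : R -> R) : Prop :=
  forall a b : R, exists L : R, forall x y : R,
    a <= x <= b -> a <= y <= b -> Rabs (f x - f y) <= L * Rabs (x - y).

Definition cont_on_nonneg (h : R -> R) : Prop :=
  forall t : R, 0 <= t -> forall eps : R, 0 < eps -> exists d : R, 0 < d /\
    forall s : R, 0 <= s -> Rabs (s - t) < d -> Rabs (h s - h t) < eps.

Definition lim_0plus (h : R -> R) (l : R) : Prop :=
  forall eps : R, 0 < eps -> exists d : R, 0 < d /\
    forall x : R, 0 < x < d -> Rabs (h x - l) < eps.

Definition lim_0plus_infty (h : R -> R) : Prop :=
  forall M : R, exists d : R, 0 < d /\ forall x : R, 0 < x < d -> M < h x.

Definition lim_infty (h : R -> R) (l : R) : Prop :=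
  forall eps : R, 0 < eps -> exists T : R,
    forall t : R, T < t -> Rabs (h t - l) < eps.

Definition lim_infty_infty (h : R -> R) : Prop :=
  forall M : R, exists T : R, forall t : R, T < t -> M < h t.

(* RV_0(beta): positive on (0,oo), phi(lam x)/phi(x) -> lam^beta as x -> 0+.
   (Measurability is automatic for the continuous functions used here.) *)
Definition RV0 (beta : R) (phi : R -> R) : Prop :=
  (forall x : R, 0 < x -> 0 < phi x) /\
  forall lam : R, 0 < lam ->
    lim_0plus (fun x => phi (lam * x) / phi x) (Rpower lam beta).

Definition RVinf (alpha : R) (h : R -> R) : Prop :=
  (forall t : R, 0 < t -> 0 < h t) /\
  forall lam : R, 0 < lam ->
    lim_infty (fun t => h (lam * t) / h t) (Rpower lam alpha).

From Stdlib Require Import Reals Lra Ranalysis5.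
From Coquelicot Require Import Coquelicot.
Open Scope R_scope.

(* Idea.  [F u = int_u^1 dv / f v] is decreasing with [F' = -1/f].  Fix a small
   [e > 0].  In both cases [f (Finv (e t)) <= C f (Finv t)] for large [t]
   ([ratio_bound]); in the [RV_0] case this comes from halving estimates
   [f (y/2) <= c f y] with [c < 1/2] and [F (y/2) >= rho F y] with [rho > 1].
   Since [f] is quasi-increasing near 0 and [g] dominates [f o Finv], wherever
   [F (x t) > e t], i.e. [x t < Finv (e t)], we get [f (x t) < g t]
   ([forcing_dominates]).  So [w t = F (x t) - e t] has a negative derivative
   whenever it is positive, and a barrier principle bounds it: [F (x t) < m + e t]
   for large [t].  As [e] is arbitrary, [F (x t) / t -> 0]. *)

Lemma loc_lipschitz_continuity_pt (f : R -> R) :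
  loc_lipschitz f -> forall u, continuity_pt f u.
Proof.
  intros Hlip u eps Heps.
  destruct (Hlip (u - 1) (u + 1)) as [L HL].
  set (K := Rabs L + 1).
  assert (HK : 0 < K) by (pose proof (Rabs_pos L); unfold K; lra).
  exists (Rmin 1 (eps / K)). split.
  - apply Rmin_pos; [lra | apply Rdiv_lt_0_compat; lra].
  - intros v [_ Hv]; simpl in *; unfold R_dist in *.
    pose proof (Rmin_l 1 (eps / K)); pose proof (Rmin_r 1 (eps / K)).
    assert (Hnear : Rabs (v - u) < 1) by lra.
    apply Rabs_def2 in Hnear.
    assert (Hbound : Rabs (f v - f u) <= K * Rabs (v - u)).
    { pose proof (HL v u ltac:(lra) ltac:(lra)).
      pose proof (RRle_abs L); pose proof (Rabs_pos (v - u)); unfold K; nra. }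
    assert (Hsmall : K * Rabs (v - u) < K * (eps / K))
      by (apply Rmult_lt_compat_l; lra).
    replace (K * (eps / K)) with eps in Hsmall by (field; lra).
    lra.
Qed.

Lemma sign_pos (f : R -> R) :
  (forall u, u <> 0 -> 0 < u * f u) -> forall u, 0 < u -> 0 < f u.
Proof.
  intros Hsign u Hu. specialize (Hsign u ltac:(lra)).
  destruct (Rlt_or_le 0 (f u)); [assumption | nra].
Qed.

Definition quasi_increasing_at_0 (f : R -> R) : Prop :=
  exists d, 0 < d /\ forall a b, 0 < a -> a <= b -> b < d -> f a <= 3 * f b.

Lemma quasi_monotone (f : R -> R) :
  (forall u, 0 < u -> 0 < f u) ->
  (exists (delta : R) (phi : R -> R), 0 < delta /\
     (forall a b : R, 0 < a -> a <= b -> b < delta -> phi a <= phi b) /\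
     lim_0plus (fun u => f u / phi u) 1) ->
  quasi_increasing_at_0 f.
Proof.
  intros Hpos [delta [phi [Hdelta [Hmono Hequiv]]]].
  destruct (Hequiv (1/2) ltac:(lra)) as [d [Hd Hclose]].
  assert (Hsandwich : forall u, 0 < u < d -> f u <= 3/2 * phi u /\ phi u <= 2 * f u).
  { intros u Hu. specialize (Hclose u Hu). apply Rabs_def2 in Hclose.
    pose proof (Hpos u ltac:(lra)).
    destruct (Rtotal_order (phi u) 0) as [Hneg | [Hzero | Hphi]].
    - assert (f u / phi u < 0)
        by (apply Rmult_pos_neg; [lra | apply Rinv_lt_0_compat; lra]).
      lra.
    - rewrite Hzero in Hclose. unfold Rdiv in Hclose. rewrite Rinv_0 in Hclose. lra.
    - set (q := f u / phi u) in *.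
      assert (f u = q * phi u) by (unfold q; field; lra).
      split; nra. }
  exists (Rmin delta d). split; [apply Rmin_pos; lra |].
  intros a b Ha Hab Hb. pose proof (Rmin_l delta d); pose proof (Rmin_r delta d).
  pose proof (Hsandwich a ltac:(lra)); pose proof (Hsandwich b ltac:(lra)).
  pose proof (Hmono a b Ha Hab ltac:(lra)). lra.
Qed.

Lemma first_hitting_time (w : R -> R) (a b m : R) :
  (forall t, a <= t <= b -> continuity_pt w t) -> a <= b -> w a < m -> m <= w b ->
  exists s0, a < s0 <= b /\ w s0 = m /\ forall r, a <= r < s0 -> w r < m.
Proof.
  intros Hcont Hab Ha Hb.
  set (E := fun s => a <= s <= b /\ forall r, a <= r <= s -> w r < m).
  assert (HEa : E a).
  { split; [lra |]. intros r Hr. replace r with a by lra. exact Ha. }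
  destruct (completeness E (ex_intro _ b (fun s Hs => proj2 (proj1 Hs)))
              (ex_intro _ a HEa)) as [s0 [Hub Hlub]].
  assert (Has0 : a <= s0) by (apply Hub; exact HEa).
  assert (Hs0b : s0 <= b) by (apply Hlub; intros s [Hs _]; lra).
  assert (Hbelow : forall r, a <= r < s0 -> w r < m).
  { intros r Hr.
    destruct (Classical_Prop.classic (exists s, E s /\ r < s)) as [[s [[_ Hs] Hrs]] | Hno].
    - apply Hs; lra.
    - assert (s0 <= r); [| lra]. apply Hlub. intros s Hs.
      destruct (Rlt_or_le r s); [exfalso; eauto | lra]. }
  destruct (Rtotal_order (w s0) m) as [Hlt | [Heq | Hgt]].
  - (* [w s0 < m]: continuity lets [E] extend beyond [s0] *)
    exfalso.
    destruct (Hcont s0 ltac:(lra) (m - w s0) ltac:(lra)) as [d [Hd Hnear]].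
    assert (Hnear' : forall r, a <= r <= b -> Rabs (r - s0) < d -> w r < m).
    { intros r Hr Hrd. destruct (Req_dec r s0) as [-> | Hne]; [lra |].
      specialize (Hnear r (conj (conj I (not_eq_sym Hne)) Hrd)).
      simpl in Hnear; unfold R_dist in Hnear. apply Rabs_def2 in Hnear. lra. }
    assert (Hs0b' : s0 < b) by (destruct (Rle_lt_or_eq_dec s0 b Hs0b) as [| ->]; lra).
    set (s1 := Rmin (s0 + d / 2) b).
    assert (Hs1d : s1 <= s0 + d / 2) by apply Rmin_l.
    assert (Hs1b : s1 <= b) by apply Rmin_r.
    assert (Hs1 : s0 < s1) by (apply Rmin_glb_lt; lra).
    assert (HE1 : E s1).
    { split; [lra |]. intros r Hr.
      destruct (Rlt_or_le r s0); [apply Hbelow; lra |].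
      apply Hnear'; [lra | apply Rabs_def1; lra]. }
    pose proof (Hub s1 HE1). lra.
  - assert (Has0' : a < s0) by (destruct (Rle_lt_or_eq_dec a s0 Has0) as [| <-]; lra).
    exists s0. split; [lra | split; [exact Heq | exact Hbelow]].
  - (* [w s0 > m]: continuity forces [w > m] just before [s0] *)
    exfalso.
    assert (Has0' : a < s0) by (destruct (Rle_lt_or_eq_dec a s0 Has0) as [| <-]; lra).
    destruct (Hcont s0 ltac:(lra) (w s0 - m) ltac:(lra)) as [d [Hd Hnear]].
    set (r := Rmax a (s0 - d / 2)).
    assert (Hra : a <= r) by apply Rmax_l.
    assert (Hrd' : s0 - d / 2 <= r) by apply Rmax_r.
    assert (Hr : r < s0) by (apply Rmax_lub_lt; lra).
    assert (Hne : s0 <> r) by lra.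
    assert (Hrd : Rabs (r - s0) < d) by (apply Rabs_def1; lra).
    specialize (Hnear r (conj (conj I Hne) Hrd)).
    simpl in Hnear; unfold R_dist in Hnear. apply Rabs_def2 in Hnear.
    pose proof (Hbelow r ltac:(lra)). lra.
Qed.

Lemma larger_on_left (w : R -> R) (s l a : R) :
  derivable_pt_lim w s l -> l < 0 -> a < s -> exists r, a <= r < s /\ w s < w r.
Proof.
  intros Hder Hl Has.
  destruct (Hder (- l / 2) ltac:(lra)) as [[d Hd] Hquot]; simpl in Hquot.
  set (h := - Rmin (d / 2) ((s - a) / 2)).
  assert (Hmin_d : Rmin (d / 2) ((s - a) / 2) <= d / 2) by apply Rmin_l.
  assert (Hmin_s : Rmin (d / 2) ((s - a) / 2) <= (s - a) / 2) by apply Rmin_r.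
  assert (Hmin_pos : 0 < Rmin (d / 2) ((s - a) / 2)) by (apply Rmin_pos; lra).
  assert (Hh : h < 0) by (unfold h; lra).
  assert (Habs : Rabs h < d) by (rewrite Rabs_left by lra; unfold h; lra).
  specialize (Hquot h ltac:(lra) Habs). apply Rabs_def2 in Hquot.
  set (q := (w (s + h) - w s) / h) in *.
  assert (w (s + h) - w s = q * h) by (unfold q; field; lra).
  exists (s + h). split; [unfold h; lra | nra].
Qed.

Lemma barrier (w w' : R -> R) (a m : R) :
  (forall t, a <= t -> derivable_pt_lim w t (w' t)) ->
  w a < m ->
  (forall t, a <= t -> w t = m -> w' t < 0) ->
  forall t, a <= t -> w t < m.
Proof.
  intros Hder Ha Hslope t Ht.
  destruct (Rlt_or_le (w t) m) as [Hlt | Hge]; [exact Hlt | exfalso].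
  assert (Hcont : forall s, a <= s <= t -> continuity_pt w s).
  { intros s Hs. apply derivable_continuous_pt. exists (w' s). apply Hder; lra. }
  destruct (first_hitting_time w a t m Hcont Ht Ha Hge) as [s0 [Hs0 [Hhit Hbelow]]].
  destruct (larger_on_left w s0 (w' s0) a (Hder s0 ltac:(lra))
              (Hslope s0 ltac:(lra) Hhit) ltac:(lra)) as [r [Hr Hwr]].
  pose proof (Hbelow r Hr). lra.
Qed.

Lemma eventually_scaled_gt (e T0 : R) :
  0 < e -> exists T, 0 <= T /\ forall t, T < t -> T0 < e * t.
Proof.
  intros He. exists (Rmax (T0 / e) 0). split; [apply Rmax_r |].
  intros t Ht. pose proof (Rmax_l (T0 / e) 0).
  assert (Hlt : e * (T0 / e) < e * t) by (apply Rmult_lt_compat_l; lra).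
  replace (e * (T0 / e)) with T0 in Hlt by (field; lra). exact Hlt.
Qed.

Definition ratio_bound (h : R -> R) (e : R) : Prop :=
  exists C T, 0 < C /\ forall t, T < t -> h (e * t) <= C * h t.

Lemma RVinf_ratio_bound (alpha : R) (h : R -> R) (e : R) :
  RVinf alpha h -> 0 < e -> ratio_bound h e.
Proof.
  intros [Hpos Hlim] He.
  destruct (Hlim e He 1 ltac:(lra)) as [T HT].
  exists (Rpower e alpha + 1), (Rmax T 0). split.
  { pose proof (exp_pos (alpha * ln e)). unfold Rpower. lra. }
  intros t Ht. pose proof (Rmax_l T 0); pose proof (Rmax_r T 0).
  specialize (HT t ltac:(lra)). apply Rabs_def2 in HT.
  pose proof (Hpos t ltac:(lra)).
  set (q := h (e * t) / h t) in *.
  replace (h (e * t)) with (q * h t) by (unfold q; field; lra).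
  apply Rmult_le_compat_r; lra.
Qed.

Lemma RV0_halving (beta : R) (f : R -> R) :
  1 < beta -> RV0 beta f ->
  exists d c c2, 0 < d /\ 0 < c < / 2 /\ 0 < c2 /\
    forall y, 0 < y < d -> c2 * f y <= f (/ 2 * y) <= c * f y.
Proof.
  intros Hbeta [Hpos Hlim].
  set (c0 := Rpower (/ 2) beta).
  assert (Hc0 : 0 < c0) by (unfold c0, Rpower; apply exp_pos).
  assert (Hc0_half : c0 < / 2).
  { unfold c0, Rpower. rewrite ln_Rinv by lra.
    assert (Hln2 : 0 < ln 2) by (rewrite <- ln_1; apply ln_increasing; lra).
    rewrite <- (exp_ln (/ 2)) by lra. rewrite ln_Rinv by lra.
    apply exp_increasing. nra. }
  set (eta := Rmin ((/ 2 - c0) / 2) (c0 / 2)).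
  assert (Heta : 0 < eta) by (apply Rmin_pos; lra).
  assert (Heta1 : eta <= (/ 2 - c0) / 2) by apply Rmin_l.
  assert (Heta2 : eta <= c0 / 2) by apply Rmin_r.
  destruct (Hlim (/ 2) ltac:(lra) eta Heta) as [d [Hd Hclose]].
  exists d, (c0 + eta), (c0 - eta). do 3 (split; [lra |]).
  intros y Hy. specialize (Hclose y Hy). fold c0 in Hclose. apply Rabs_def2 in Hclose.
  pose proof (Hpos y ltac:(lra)).
  set (q := f (/ 2 * y) / f y) in *.
  replace (f (/ 2 * y)) with (q * f y) by (unfold q; field; lra).
  split; nra.
Qed.

Lemma pow_scaled_gt_1 (rho e : R) : 1 < rho -> 0 < e -> exists k, 1 < rho ^ k * e.
Proof.
  intros Hrho He.
  destruct (Pow_x_infinity rho ltac:(rewrite Rabs_pos_eq; lra) (2 / e)) as [k Hk].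
  exists k. specialize (Hk k (Nat.le_refl k)).
  rewrite Rabs_pos_eq in Hk by (apply pow_le; lra).
  apply Rge_le, Rmult_le_compat_r with (r := e) in Hk; [| lra].
  replace (2 / e * e) with 2 in Hk by (field; lra). lra.
Qed.

Lemma halving_iterate (h : R -> R) (r d : R) :
  0 < r -> (forall y, 0 < y < d -> r * h y <= h (/ 2 * y)) ->
  forall k y, 0 < y < d -> r ^ k * h y <= h (y / 2 ^ k).
Proof.
  intros Hr Hhalf. induction k as [| k IH]; intros y Hy.
  - simpl. replace (y / 1) with y by field. lra.
  - assert (H2k : 1 <= 2 ^ k) by (apply pow_R1_Rle; lra).
    assert (Hyk : 0 < y / 2 ^ k <= y).
    { split; [apply Rdiv_lt_0_compat; lra |].
      apply Rmult_le_reg_r with (2 ^ k); [lra |].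
      replace (y / 2 ^ k * 2 ^ k) with y by (field; lra). nra. }
    replace (y / 2 ^ S k) with (/ 2 * (y / 2 ^ k)) by (simpl; field; lra).
    pose proof (Hhalf (y / 2 ^ k) ltac:(lra)).
    pose proof (Rmult_le_compat_l r _ _ ltac:(lra) (IH y Hy)).
    simpl. lra.
Qed.

Lemma F_as_RInt (f F : R -> R) :
  (forall u : R, 0 < u ->
     exists pr : Riemann_integrable (fun v => / f v) u 1, F u = RiemannInt pr) ->
  forall u, 0 < u -> F u = RInt (fun v => / f v) u 1.
Proof.
  intros HF u Hu. destruct (HF u Hu) as [pr ->]. symmetry. apply RInt_Reals.
Qed.

Section TimeMap.

Variables f F Finv : R -> R.
Hypothesis f_lip : loc_lipschitz f.
Hypothesis f_sign : forall u, u <> 0 -> 0 < u * f u.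
Hypothesis F_def : forall u, 0 < u -> F u = RInt (fun v => / f v) u 1.

Let f_pos : forall u, 0 < u -> 0 < f u := sign_pos f f_sign.

Lemma inv_f_continuous u : 0 < u -> continuous (fun v => / f v) u.
Proof.
  intros Hu. apply continuity_pt_filterlim, continuity_pt_inv.
  - apply loc_lipschitz_continuity_pt, f_lip.
  - pose proof (f_pos u Hu). lra.
Qed.

Lemma inv_f_integrable p q : 0 < p -> 0 < q -> ex_RInt (fun v => / f v) p q.
Proof.
  intros Hp Hq. apply (@ex_RInt_continuous R_CompleteNormedModule).
  intros z Hz. apply inv_f_continuous.
  destruct (Rle_dec p q);
    [rewrite Rmin_left in Hz by lra | rewrite Rmin_right in Hz by lra]; lra.
Qed.

Lemma F_sub u v : 0 < u -> 0 < v -> F u - F v = RInt (fun w => / f w) u v.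
Proof.
  intros Hu Hv. rewrite !F_def by lra.
  rewrite <- (RInt_Chasles (fun w => / f w) u v 1)
    by (apply inv_f_integrable; lra).
  change (plus ?a ?b) with (a + b). ring.
Qed.

Lemma F_antitone u v : 0 < u -> u <= v -> F v <= F u.
Proof.
  intros Hu Huv.
  assert (0 <= RInt (fun w => / f w) u v).
  { apply RInt_ge_0; [lra | apply inv_f_integrable; lra |].
    intros w Hw. left. apply Rinv_0_lt_compat, f_pos. lra. }
  pose proof (F_sub u v Hu ltac:(lra)). lra.
Qed.

Lemma le_of_F_lt u v : 0 < u -> 0 < v -> F v < F u -> u <= v.
Proof.
  intros Hu Hv HF. destruct (Rle_or_lt u v) as [Hle | Hlt]; [exact Hle |].
  pose proof (F_antitone v u Hv ltac:(lra)). lra.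
Qed.

Lemma F_one : F 1 = 0.
Proof. rewrite F_def by lra. apply (@RInt_point R_CompleteNormedModule). Qed.

Lemma F_nonneg u : 0 < u <= 1 -> 0 <= F u.
Proof.
  intros Hu. pose proof F_one.
  pose proof (F_antitone u 1 ltac:(lra) ltac:(lra)). lra.
Qed.

Lemma F_derivative u : 0 < u -> derivable_pt_lim F u (- / f u).
Proof.
  intros Hu. apply is_derive_Reals.
  assert (Hball : forall y, ball u (u / 2) y -> 0 < y).
  { intros y Hy. change (Rabs (y - u) < u / 2) in Hy. apply Rabs_def2 in Hy. lra. }
  apply (is_derive_ext_loc (fun a => RInt (fun v => / f v) a 1) F).
  - exists (mkposreal (u / 2) ltac:(lra)). intros y Hy. symmetry. apply F_def, Hball, Hy.
  - apply (is_derive_RInt' (fun v => / f v) _ u 1); [| apply inv_f_continuous; exact Hu].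
    exists (mkposreal (u / 2) ltac:(lra)). intros y Hy.
    apply (@RInt_correct R_CompleteNormedModule), inv_f_integrable; [apply Hball, Hy | lra].
Qed.

(* If [f (y/2) <= c f y] with [c < 1/2], then substituting [v = w/2] in
   [int_{y/2}^{d/2} dv / f v] gives [F (y/2) - F (d/2) >= (F y - F d) / (2c)]. *)
Lemma F_halving_integral (d c : R) :
  0 < d -> 0 < c -> (forall y, 0 < y < d -> f (/ 2 * y) <= c * f y) ->
  forall y, 0 < y < d -> / (2 * c) * (F y - F d) <= F (/ 2 * y) - F (/ 2 * d).
Proof.
  intros Hd Hc Hhalf y Hy.
  rewrite !F_sub by lra.
  assert (Hsubst : RInt (fun w => / f w) (/ 2 * y) (/ 2 * d) =
                   RInt (fun z => / 2 * / f (/ 2 * z + 0)) y d).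
  { replace (/ 2 * y) with (/ 2 * y + 0) by ring.
    replace (/ 2 * d) with (/ 2 * d + 0) by ring.
    assert (Hint : ex_RInt (fun w => / f w) (/ 2 * y + 0) (/ 2 * d + 0))
      by (apply inv_f_integrable; lra).
    symmetry. exact (@RInt_comp_lin R_CompleteNormedModule (fun w => / f w) (/ 2) 0 y d Hint). }
  rewrite Hsubst.
  rewrite <- (@RInt_scal R_CompleteNormedModule) by (apply inv_f_integrable; lra).
  apply RInt_le; [lra | | |].
  - apply (@ex_RInt_scal R_NormedModule), inv_f_integrable; lra.
  - apply (@ex_RInt_comp_lin R_NormedModule (fun w => / f w)).
    apply inv_f_integrable; lra.
  - intros z Hz. rewrite Rplus_0_r. change (scal ?a ?b) with (a * b).
    pose proof (f_pos z ltac:(lra)); pose proof (f_pos (/ 2 * z) ltac:(lra)).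
    pose proof (Hhalf z ltac:(lra)).
    replace (/ (2 * c) * / f z) with (/ (2 * c * f z)) by (field; lra).
    replace (/ 2 * / f (/ 2 * z)) with (/ (2 * f (/ 2 * z))) by (field; lra).
    apply Rinv_le_contravar; nra.
Qed.

Hypothesis F_blowup : lim_0plus_infty F.

(* Since [F] blows up at 0, the additive constants above become negligible:
   [F (y/2) >= rho F y] near 0 for some [rho > 1]. *)
Lemma F_halving_growth (d c : R) :
  0 < d -> 0 < c < / 2 -> (forall y, 0 < y < d -> f (/ 2 * y) <= c * f y) ->
  exists rho d1, 1 < rho /\ 0 < d1 /\
    forall y, 0 < y < d1 -> rho * F y <= F (/ 2 * y).
Proof.
  intros Hd Hc Hhalf.
  set (r := / (2 * c)).
  assert (Hr : 1 < r).
  { unfold r. rewrite <- Rinv_1. apply Rinv_lt_contravar; lra. }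
  set (K := r * F d - F (/ 2 * d)).
  destruct (F_blowup (Rmax (2 * K / (r - 1)) 0)) as [d' [Hd' Hlarge]].
  exists ((r + 1) / 2), (Rmin d d'). split; [lra |]. split; [apply Rmin_pos; lra |].
  intros y Hy. pose proof (Rmin_l d d'); pose proof (Rmin_r d d').
  pose proof (Rmax_l (2 * K / (r - 1)) 0).
  specialize (Hlarge y ltac:(lra)).
  pose proof (F_halving_integral d c Hd ltac:(lra) Hhalf y ltac:(lra)) as Hint.
  fold r in Hint.
  assert (Hdom : K < (r - 1) / 2 * F y).
  { assert (H2K : 2 * K / (r - 1) < F y) by lra.
    apply Rmult_lt_compat_l with (r := (r - 1) / 2) in H2K; [| lra].
    replace ((r - 1) / 2 * (2 * K / (r - 1))) with K in H2K by (field; lra). lra. }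
  unfold K in Hdom. lra.
Qed.

Hypothesis Finv_F : forall u, 0 < u -> Finv (F u) = u.

(* [F] maps (0, 1] onto [0, +oo), so [Finv] is a right inverse of [F] on (0, +oo). *)
Lemma Finv_spec s : 0 < s -> 0 < Finv s /\ F (Finv s) = s.
Proof.
  intros Hs. destruct (F_blowup s) as [d [Hd Hlarge]].
  set (y := Rmin (d / 2) (1 / 2)).
  assert (Hy_d : y <= d / 2) by apply Rmin_l.
  assert (Hy_1 : y <= 1 / 2) by apply Rmin_r.
  assert (Hy : 0 < y) by (apply Rmin_pos; lra).
  assert (HFy : s < F y) by (apply Hlarge; lra).
  pose proof F_one.
  destruct (IVT_interv (fun z => s - F z) y 1) as [z [Hz HFz]].
  - intros a Ha. apply continuity_pt_minus; [apply continuity_pt_const; intros ? ?; reflexivity |].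
    apply derivable_continuous_pt. exists (- / f a). apply F_derivative. lra.
  - lra.
  - lra.
  - lra.
  - assert (Hs_z : F z = s) by lra.
    rewrite <- Hs_z, Finv_F by lra. lra.
Qed.

Lemma Finv_small y : 0 < y -> exists T, forall s, T < s -> Finv s < y.
Proof.
  intros Hy. exists (Rmax (F y) 0). intros s Hs.
  pose proof (Rmax_l (F y) 0); pose proof (Rmax_r (F y) 0).
  destruct (Finv_spec s ltac:(lra)) as [_ HFs].
  destruct (Rlt_or_le (Finv s) y) as [Hlt | Hge]; [exact Hlt |].
  pose proof (F_antitone y (Finv s) Hy Hge). lra.
Qed.

(* Case [f in RV_0(beta)], [beta > 1]: choosing [k] with [rho^k e > 1] gives
   [Finv (e t) / 2^k <= Finv t], and the lower halving bound together with
   quasi-increasingness yields [f (Finv (e t)) <= 3 c2^(-k) f (Finv t)]. *)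
Lemma RV0_ratio_bound (beta e : R) :
  quasi_increasing_at_0 f ->
  1 < beta -> RV0 beta f -> 0 < e < 1 ->
  ratio_bound (fun t => f (Finv t)) e.
Proof.
  intros [dq [Hdq Hquasi]] Hbeta Hrv He.
  destruct (RV0_halving beta f Hbeta Hrv) as [d [c [c2 [Hd [Hc [Hc2 Hhalf]]]]]].
  destruct (F_halving_growth d c Hd Hc (fun y Hy => proj2 (Hhalf y Hy)))
    as [rho [d1 [Hrho [Hd1 Hgrow]]]].
  destruct (pow_scaled_gt_1 rho e Hrho ltac:(lra)) as [k Hrho_k].
  set (y := Rmin dq (Rmin d d1)).
  assert (Hy : 0 < y) by (apply Rmin_pos; [lra | apply Rmin_pos; lra]).
  assert (Hy_dq : y <= dq) by apply Rmin_l.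
  assert (Hy_d : y <= d) by (eapply Rle_trans; [apply Rmin_r | apply Rmin_l]).
  assert (Hy_d1 : y <= d1) by (eapply Rle_trans; [apply Rmin_r | apply Rmin_r]).
  destruct (Finv_small y Hy) as [T0 HT0].
  destruct (eventually_scaled_gt e T0 ltac:(lra)) as [T [HT HeT]].
  assert (Hc2k : 0 < c2 ^ k) by (apply pow_lt; lra).
  exists (3 / c2 ^ k), T. split; [apply Rdiv_lt_0_compat; lra |].
  intros t Ht. specialize (HeT t Ht). specialize (HT0 _ HeT).
  destruct (Finv_spec (e * t) ltac:(nra)) as [Hb HFb].
  destruct (Finv_spec t ltac:(lra)) as [Ha HFa].
  set (b := Finv (e * t)) in *. set (a := Finv t) in *.
  assert (H2k : 0 < 2 ^ k) by (apply pow_lt; lra).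
  assert (Hbk : 0 < b / 2 ^ k) by (apply Rdiv_lt_0_compat; lra).
  assert (Hab : a <= b) by (apply le_of_F_lt; nra).
  assert (Hbk_a : b / 2 ^ k <= a).
  { apply le_of_F_lt; [lra | lra |].
    pose proof (halving_iterate F rho d1 ltac:(lra) Hgrow k b ltac:(lra)). nra. }
  pose proof (Hquasi (b / 2 ^ k) a Hbk Hbk_a ltac:(lra)).
  pose proof (halving_iterate f c2 d Hc2 (fun y Hy => proj1 (Hhalf y Hy)) k b ltac:(lra)).
  apply Rmult_le_reg_l with (r := c2 ^ k); [lra |].
  replace (c2 ^ k * (3 / c2 ^ k * f a)) with (3 * f a) by (field; lra). lra.
Qed.

End TimeMap.

(* A solution starting at [xi > 0] stays positive: at a zero of [x] the
   right-hand side equals [g > 0], so [-x] cannot cross the level 0. *)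
Lemma solution_pos (f g x : R -> R) (xi : R) :
  f 0 = 0 -> (forall t, 0 < t -> 0 < g t) -> 0 < xi ->
  cont_on_nonneg x ->
  (forall t, 0 < t -> derivable_pt_lim x t (- f (x t) + g t)) ->
  x 0 = xi -> forall t, 0 <= t -> 0 < x t.
Proof.
  intros Hf0 Hg Hxi Hcont Hode Hx0.
  destruct (Hcont 0 ltac:(lra) xi Hxi) as [d [Hd Hnear]].
  assert (Hstart : forall s, 0 <= s < d -> 0 < x s).
  { intros s Hs. specialize (Hnear s ltac:(lra) ltac:(rewrite Rminus_0_r, Rabs_pos_eq; lra)).
    rewrite Hx0 in Hnear. apply Rabs_def2 in Hnear. lra. }
  intros t Ht. destruct (Rlt_or_le t (d / 2)) as [Hsmall | Hlarge]; [apply Hstart; lra |].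
  enough (Hneg : - x t < 0) by lra.
  apply (barrier (fun s => - x s) (fun s => - (- f (x s) + g s)) (d / 2) 0);
    [| pose proof (Hstart (d / 2) ltac:(lra)); lra | | exact Hlarge].
  - intros s Hs. apply derivable_pt_lim_opp, Hode. lra.
  - intros s Hs Hzero. replace (x s) with 0 by lra. rewrite Hf0.
    pose proof (Hg s ltac:(lra)). lra.
Qed.

Lemma sublinear_of_lines (p : R -> R) :
  (exists T, forall t, T < t -> 0 <= p t) ->
  (forall e, 0 < e <= / 2 -> exists a m, forall t, a <= t -> p t < m + e * t) ->
  lim_infty (fun t => p t / t) 0.
Proof.
  intros [T0 Hnonneg] Hlines eps Heps.
  set (e := Rmin (eps / 2) (/ 2)).
  assert (He_eps : e <= eps / 2) by apply Rmin_l.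
  assert (He_half : e <= / 2) by apply Rmin_r.
  assert (He : 0 < e) by (apply Rmin_pos; lra).
  destruct (Hlines e (conj He He_half)) as [a [m Hline]].
  destruct (eventually_scaled_gt (eps / 2) m ltac:(lra)) as [T1 [HT1 Hm]].
  exists (Rmax T0 (Rmax a T1)). intros t Ht.
  pose proof (Rmax_l T0 (Rmax a T1)); pose proof (Rmax_r T0 (Rmax a T1)).
  pose proof (Rmax_l a T1); pose proof (Rmax_r a T1).
  pose proof (Hnonneg t ltac:(lra)); pose proof (Hline t ltac:(lra)); pose proof (Hm t ltac:(lra)).
  assert (Het : e * t <= eps / 2 * t) by (apply Rmult_le_compat_r; lra).
  rewrite Rminus_0_r, Rabs_pos_eq by (apply Rdiv_le_0_compat; lra).
  apply Rmult_lt_reg_r with t; [lra |].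
  replace (p t / t * t) with (p t) by (field; lra). lra.
Qed.

Section Solution.

Variables f g F Finv x : R -> R.
Hypothesis f_lip : loc_lipschitz f.
Hypothesis f_sign : forall u, u <> 0 -> 0 < u * f u.
Hypothesis F_def : forall u, 0 < u -> F u = RInt (fun v => / f v) u 1.
Hypothesis F_blowup : lim_0plus_infty F.
Hypothesis Finv_F : forall u, 0 < u -> Finv (F u) = u.
Hypothesis g_big : lim_infty_infty (fun t => g t / f (Finv t)).

Let f_pos : forall u, 0 < u -> 0 < f u := sign_pos f f_sign.

Lemma forcing_dominates (e : R) :
  quasi_increasing_at_0 f ->
  0 < e -> ratio_bound (fun t => f (Finv t)) e ->
  exists T, 0 <= T /\ forall t u, T < t -> 0 < u -> e * t < F u -> f u < g t.
Proof.
  intros [dq [Hdq Hquasi]] He [C [T1 [HC Hratio]]].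
  destruct (g_big (3 * C)) as [T2 Hg].
  destruct (Finv_small f F Finv f_lip f_sign F_def F_blowup Finv_F dq Hdq) as [T3 Hsmall].
  destruct (eventually_scaled_gt e T3 He) as [T4 [HT4 HeT]].
  exists (Rmax T1 (Rmax T2 T4)). split.
  { pose proof (Rmax_r T1 (Rmax T2 T4)); pose proof (Rmax_r T2 T4). lra. }
  intros t u Ht Hu HFu.
  pose proof (Rmax_l T1 (Rmax T2 T4)); pose proof (Rmax_r T1 (Rmax T2 T4)).
  pose proof (Rmax_l T2 T4); pose proof (Rmax_r T2 T4).
  destruct (Finv_spec f F Finv f_lip f_sign F_def F_blowup Finv_F (e * t) ltac:(nra))
    as [Hb HFb].
  destruct (Finv_spec f F Finv f_lip f_sign F_def F_blowup Finv_F t ltac:(lra))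
    as [Ha _].
  assert (Hub : u <= Finv (e * t))
    by (apply (le_of_F_lt f F f_lip f_sign F_def); lra).
  pose proof (Hquasi u (Finv (e * t)) Hu Hub (Hsmall _ (HeT t ltac:(lra)))).
  pose proof (Hratio t ltac:(lra)).
  specialize (Hg t ltac:(lra)). pose proof (f_pos _ Ha).
  assert (Hgt : 3 * C * f (Finv t) < g t).
  { apply Rmult_lt_compat_r with (r := f (Finv t)) in Hg; [| lra].
    replace (g t / f (Finv t) * f (Finv t)) with (g t) in Hg by (field; lra). lra. }
  nra.
Qed.

Hypothesis x_pos : forall t, 0 <= t -> 0 < x t.
Hypothesis x_ode : forall t, 0 < t -> derivable_pt_lim x t (- f (x t) + g t).

(* Hence [w t = F (x t) - e t] decreases whenever it is positive, and the
   barrier principle keeps it below a constant: [F (x t) < m + e t]. *)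
Lemma F_solution_below_line (e : R) :
  quasi_increasing_at_0 f ->
  0 < e -> ratio_bound (fun t => f (Finv t)) e ->
  exists a m, forall t, a <= t -> F (x t) < m + e * t.
Proof.
  intros Hquasi He Hratio.
  destruct (forcing_dominates e Hquasi He Hratio) as [T [HT Hdom]].
  set (a := T + 1).
  set (w := fun t => F (x t) - e * t).
  set (w' := fun t => - / f (x t) * (- f (x t) + g t) - e).
  assert (Hder : forall t, a <= t -> derivable_pt_lim w t (w' t)).
  { intros t Ht. apply derivable_pt_lim_minus.
    - apply (derivable_pt_lim_comp x F); [apply x_ode; unfold a in Ht; lra |].
      apply (F_derivative f F f_lip f_sign F_def), x_pos. unfold a in Ht; lra.
    - apply is_derive_Reals. auto_derive; [exact I | ring]. }
  set (m := Rmax (w a) 0 + 1).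
  assert (Hm_start : w a < m) by (pose proof (Rmax_l (w a) 0); unfold m; lra).
  assert (Hm_pos : 0 < m) by (pose proof (Rmax_r (w a) 0); unfold m; lra).
  exists a, m. intros t Ht.
  enough (Hw : w t < m) by (unfold w in Hw; lra).
  apply (barrier w w' a m Hder Hm_start); [| exact Ht].
  intros s Hs Hlevel. unfold w in Hlevel. unfold w'.
  assert (Hxs : 0 < x s) by (apply x_pos; unfold a in Hs; lra).
  pose proof (Hdom s (x s) ltac:(unfold a in Hs; lra) Hxs ltac:(lra)).
  pose proof (f_pos _ Hxs).
  assert (Hfrac : 0 < (g s - f (x s)) / f (x s)) by (apply Rdiv_lt_0_compat; lra).
  replace (- / f (x s) * (- f (x s) + g s) - e) with (- ((g s - f (x s)) / f (x s)) - e)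
    by (field; lra).
  lra.
Qed.

End Solution.

Theorem theorem3
  (f g : R -> R) (xi : R) (F Finv : R -> R) (x : R -> R)
  (* standing assumptions *)
  (Hf_lip : loc_lipschitz f)
  (Hf0 : f 0 = 0)
  (Hf_sign : forall u : R, u <> 0 -> 0 < u * f u)
  (Hg_cont : cont_on_nonneg g)
  (Hg_pos : forall t : R, 0 < t -> 0 < g t)
  (Hxi : 0 < xi)
  (HF_def : forall u : R, 0 < u ->
     exists pr : Riemann_integrable (fun v => / f v) u 1, F u = RiemannInt pr)
  (HF_0 : lim_0plus_infty F)
  (HFinv : forall u : R, 0 < u -> Finv (F u) = u)
  (* x is the continuous solution of x' = -f(x) + g, x(0) = xi *)
  (Hx_cont : cont_on_nonneg x)
  (Hx_ode : forall t : R, 0 < t -> derivable_pt_lim x t (- f (x t) + g t))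
  (Hx0 : x 0 = xi)
  (* further hypotheses *)
  (Hphi : exists (delta : R) (phi : R -> R), 0 < delta /\
     (forall a b : R, 0 < a -> a <= b -> b < delta -> phi a <= phi b) /\
     lim_0plus (fun u => f u / phi u) 1)
  (Hg_big : lim_infty_infty (fun t => g t / f (Finv t)))
  (Hx_lim : lim_infty x 0)
  (Hcase : (exists beta : R, 1 < beta /\ RV0 beta f) \/
           RVinf (-1) (fun t => f (Finv t))) :
  lim_infty (fun t => F (x t) / t) 0.
Proof.
  pose proof (F_as_RInt f F HF_def) as HF.
  pose proof (solution_pos f g x xi Hf0 Hg_pos Hxi Hx_cont Hx_ode Hx0) as Hx_pos.
  pose proof (quasi_monotone f (sign_pos f Hf_sign) Hphi) as Hquasi.
  apply sublinear_of_lines.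
  - (* [F (x t) >= 0] as soon as [x t <= 1] *)
    destruct (Hx_lim 1 ltac:(lra)) as [T HT]. exists (Rmax T 0). intros t Ht.
    pose proof (Rmax_l T 0); pose proof (Rmax_r T 0).
    specialize (HT t ltac:(lra)). rewrite Rminus_0_r in HT. apply Rabs_def2 in HT.
    apply (F_nonneg f F Hf_lip Hf_sign HF). pose proof (Hx_pos t ltac:(lra)). lra.
  -
    intros e He.
    apply (F_solution_below_line f g F Finv x Hf_lip Hf_sign HF HF_0 HFinv Hg_big
             Hx_pos Hx_ode e Hquasi ltac:(lra)).
    destruct Hcase as [[beta [Hbeta Hrv]] | Hrv].
    + apply (RV0_ratio_bound f F Finv Hf_lip Hf_sign HF HF_0 HFinv beta e Hquasi
               Hbeta Hrv). lra.
    + apply (RVinf_ratio_bound (-1) _ e Hrv). lra.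
Qed.
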